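(* For each $i$ (indices mod $8g-4$): (i) the angle at $V_{i+1}$ between the geodesics $V_{i+1}P_{i+2}$ and $V_{i+1}Q_{i+1}$ is greater than $\pi/4$; (ii) the angle at $V_i$ between the geodesics $V_iQ_{i-1}$ and $V_iP_i$ is greater than $\pi/4$.
   Context: Fix $g\ge 2$. Let $\mathcal F$ be the regular hyperbolic $(8g-4)$-gon in the Poincaré unit disk, centered at $0$, with all interior angles equal to $\pi/2$. Label its sides $1,\dots,8g-4$ counterclockwise (indices mod $8g-4$) and its vertices $V_i$ so that side $i$ joins $V_i$ to $V_{i+1}$. The complete geodesic containing side $i$ has endpoints $P_i$ (beyond $V_i$) and $Q_{i+1}$ (beyond $V_{i+1}$) on the unit circle; counterclockwise order on the circle is $P_1,Q_1,P_2,Q_2,\dots,P_{8g-4},Q_{8g-4}$. For a vertex $V$ and a point $X$ on the unit circle, $VX$ denotes the geodesic ray from $V$ to $X$. *)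

From Stdlib Require Import Reals Lra ZArith.
From Coquelicot Require Import Coquelicot.
Open Scope R_scope.

Definition nsides (g : nat) : R := 8 * INR g - 4.

Definition cis (t : R) : C := (cos t, sin t).

(* Vertex V_k of the regular polygon centered at 0 with Euclidean radius r
   and initial phase th0 (indices k in Z, hence automatically mod 8g-4;
   labelled counterclockwise). *)
Definition vert (g : nat) (r th0 : R) (k : Z) : C :=
  Cmult (RtoC r) (cis (th0 + 2 * PI * IZR k / nsides g)).

(* Unit tangent direction (up to a positive factor) at the point V of the
   hyperbolic geodesic from V towards X (X in the open disk or on the unit
   circle): apply the disk isometry z |-> (z - V)/(1 - conj V z) sending V
   to 0 (whose derivative at V is a positive real), where geodesics through
   0 are diameters. *)
Definition gdir (V X : C) : C :=
  Cdiv (Cminus X V) (Cminus (RtoC 1) (Cmult (Cconj V) X)).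

Definition vangle (u v : C) : R :=
  acos (Re (Cmult u (Cconj v)) / (Cmod u * Cmod v)).

(* Hyperbolic angle at V between the geodesics VX and VY
   (the Poincare disk model is conformal). *)
Definition hangle (V X Y : C) : R := vangle (gdir V X) (gdir V Y).

Definition disk_aut (a : C) (th : R) (z : C) : C :=
  Cmult (cis th) (Cdiv (Cplus z a) (Cplus (RtoC 1) (Cmult (Cconj a) z))).

(* The complete geodesic with ideal endpoints P (start) and Q (end) passes
   through A and then B, in the order P, A, B, Q: it is the image of the
   real diameter (-1,1) under a disk isometry sending -1 to P and 1 to Q. *)
Definition geod_through (P Q A B : C) : Prop :=
  exists (a : C) (th s t : R),
    Cmod a < 1 /\
    disk_aut a th (RtoC (-1)) = P /\ disk_aut a th (RtoC 1) = Q /\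
    -1 < s /\ s < t /\ t < 1 /\
    disk_aut a th (RtoC s) = A /\ disk_aut a th (RtoC t) = B.

(* Rotating the polygon (and, for part (ii), reflecting it) we may assume the vertex is
   [r] and the vertices are [r c^j] with [c = e^(2 pi i/N) = (x, y)]. The right angle at
   [r] forces the two sides through [r] to leave it in the directions [(-1, 1)] and
   [(-1, -1)], at [pi/4] from the inward radius; so the geodesic towards [Q_(i+1)] leaves
   [r] in the direction [(1, 1)], and it suffices that the direction towards [P_(i+2)]
   has negative real part, i.e. [(1 + r^2) Re P_(i+2) < 2 r]. The same right angle at the
   next vertex [r c] gives the direction there towards [P_(i+2)], hence [P_(i+2)]
   explicitly; the inequality then reduces to [x (1 + x) > 1/4], true as [N >= 12]. *)

From Stdlib Require Import Reals ZArith Lra Nsatz.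
From Coquelicot Require Import Coquelicot.
Open Scope R_scope.

Add Field C_field : C_field_theory.

Lemma Cconj_RtoC (x : R) : Cconj (RtoC x) = RtoC x.
Proof. apply injective_projections; simpl; ring. Qed.

Lemma Cconj_inv (z : C) : Cconj (/ z) = (/ Cconj z)%C.
Proof.
  destruct z as [z1 z2]; unfold Cinv, Cconj; cbn [fst snd].
  replace ((- z2) ^ 2) with (z2 ^ 2) by ring; f_equal; unfold Rdiv; ring.
Qed.

Lemma Cmod_eq_1 (z : C) : Cmod z = 1 <-> Re z ^ 2 + Im z ^ 2 = 1.
Proof.
  split; intros H.
  - rewrite <- Cmod2_alt, H; ring.
  - unfold Cmod, Re, Im in *; rewrite H; apply sqrt_1.
Qed.

Lemma Cconj_mult_unit (c : C) : Cmod c = 1 -> (Cconj c * c)%C = 1%C.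
Proof.
  intros H; rewrite Cmult_comm, <- Cmod2_conj, H.
  apply injective_projections; simpl; ring.
Qed.

Lemma Cmod_mult_lt_1 (a b : C) : Cmod a < 1 -> Cmod b <= 1 -> Cmod (a * b) < 1.
Proof. rewrite Cmod_mult; pose proof (Cmod_ge_0 a); pose proof (Cmod_ge_0 b); nra. Qed.

Lemma one_sub_neq0 (z : C) : Cmod z < 1 -> (1 - z)%C <> 0%C.
Proof.
  intros H E; assert (Ez : z = 1%C).
  { replace z with (1 - (1 - z))%C by ring; rewrite E; ring. }
  rewrite Ez, Cmod_1 in H; lra.
Qed.

Lemma one_add_neq0 (z : C) : Cmod z < 1 -> (1 + z)%C <> 0%C.
Proof.
  intros H; replace (1 + z)%C with (1 - - z)%C by ring.
  apply one_sub_neq0; rewrite Cmod_opp; exact H.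
Qed.

(* On the unit circle, [1 - conj w z = z conj (z - w)]. *)
Lemma Cmod_one_sub_conj_mult (w z : C) :
  Cmod z = 1 -> Cmod (1 - Cconj w * z) = Cmod (z - w).
Proof.
  intros Hz.
  replace (1 - Cconj w * z)%C with (z * Cconj (z - w))%C.
  - rewrite Cmod_mult, Cmod_conj, Hz; ring.
  - rewrite Cminus_conj, <- (Cconj_mult_unit z Hz); ring.
Qed.

Lemma Cmod_cis (t : R) : Cmod (cis t) = 1.
Proof. apply Cmod_eq_1; pose proof (sin2_cos2 t) as E; unfold Rsqr in E; simpl; nra. Qed.

Lemma cis_add (a b : R) : cis (a + b) = (cis a * cis b)%C.
Proof.
  unfold cis; rewrite cos_plus, sin_plus.
  apply injective_projections; simpl; ring.
Qed.

Lemma cis_opp (a : R) : cis (- a) = Cconj (cis a).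
Proof. unfold cis, Cconj; simpl; rewrite cos_neg, sin_neg; reflexivity. Qed.

Lemma cis_0 : cis 0 = 1%C.
Proof. unfold cis; rewrite cos_0, sin_0; reflexivity. Qed.

Definition ortho_map (f : C -> C) : Prop :=
  exists c : C, Cmod c = 1 /\
    ((forall z, f z = (c * z)%C) \/ (forall z, f z = Cconj (c * z))).

Lemma ortho_map_rot (c : C) : Cmod c = 1 -> ortho_map (fun z => (c * z)%C).
Proof. intros Hc; exists c; split; [exact Hc | left; reflexivity]. Qed.

Lemma ortho_map_rot_conj (c : C) : Cmod c = 1 -> ortho_map (fun z => Cconj (c * z)).
Proof. intros Hc; exists c; split; [exact Hc | right; reflexivity]. Qed.

Lemma Cmod_ortho_map (f : C -> C) (z : C) : ortho_map f -> Cmod (f z) = Cmod z.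
Proof.
  intros (c & Hc & [Hf | Hf]); rewrite Hf; rewrite ?Cmod_conj, Cmod_mult, Hc; ring.
Qed.

Lemma ortho_map_scale_opp (f : C -> C) (l : R) (w : C) :
  ortho_map f -> f (RtoC l * - w)%C = (RtoC l * - f w)%C.
Proof.
  intros (c & _ & [Hf | Hf]); rewrite !Hf; [ring|].
  rewrite !Cmult_conj, Copp_conj, Cconj_RtoC; ring.
Qed.

Lemma gdir_conj (V X : C) : gdir (Cconj V) (Cconj X) = Cconj (gdir V X).
Proof.
  unfold gdir, Cdiv.
  rewrite Cmult_conj, Cconj_inv, !Cminus_conj, Cmult_conj, Cconj_conj, (Cconj_RtoC 1).
  reflexivity.
Qed.

Lemma gdir_ortho_map (f : C -> C) (A X : C) :
  ortho_map f -> gdir (f A) (f X) = f (gdir A X).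
Proof.
  intros (c & Hc & Hf).
  assert (Hrot : forall A X, gdir (c * A) (c * X) = (c * gdir A X)%C).
  { clear A X; intros A X; unfold gdir.
    replace (Cconj (c * A) * (c * X))%C with (Cconj A * X)%C.
    - unfold Cdiv; ring.
    - rewrite Cmult_conj, <- (Cmult_1_l (Cconj A * X)), <- (Cconj_mult_unit c Hc); ring. }
  destruct Hf as [Hf | Hf]; rewrite !Hf; [|rewrite gdir_conj]; rewrite Hrot; reflexivity.
Qed.

Lemma vangle_ortho_map (f : C -> C) (u v : C) :
  ortho_map f -> vangle (f u) (f v) = vangle u v.
Proof.
  intros (c & Hc & Hf).
  assert (Hrot : forall u v, vangle (c * u) (c * v) = vangle u v).
  { clear u v; intros u v; unfold vangle.
    rewrite !Cmod_mult, Hc, Cmult_conj.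
    replace (c * u * (Cconj c * Cconj v))%C with ((Cconj c * c) * (u * Cconj v))%C by ring.
    rewrite Cconj_mult_unit, Cmult_1_l by exact Hc; f_equal; f_equal; ring. }
  destruct Hf as [Hf | Hf]; rewrite !Hf; [apply Hrot|].
  rewrite <- (Hrot u v); unfold vangle.
  rewrite !Cmod_conj, <- Cmult_conj, re_conj; reflexivity.
Qed.

Lemma hangle_ortho_map (f : C -> C) (V X Y : C) :
  ortho_map f -> hangle (f V) (f X) (f Y) = hangle V X Y.
Proof.
  intros Hf; unfold hangle; rewrite !gdir_ortho_map by exact Hf.
  apply vangle_ortho_map, Hf.
Qed.

(** * Hyperbolic directions and geodesics *)

(* [X] lies on the continuation beyond [A] of the geodesic from [B] through [A]: the
   initial directions at [A] towards [X] and towards [B] are opposite. *)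
Definition geod_beyond (B A X : C) : Prop :=
  exists l : R, 0 < l /\ gdir A X = (RtoC l * - gdir A B)%C.

Lemma geod_beyond_ortho_map (f : C -> C) (B A X : C) :
  ortho_map f -> geod_beyond B A X -> geod_beyond (f B) (f A) (f X).
Proof.
  intros Hf (l & Hl & E); exists l; split; [exact Hl|].
  rewrite !gdir_ortho_map, E by exact Hf; apply ortho_map_scale_opp, Hf.
Qed.

Lemma gdir_den_neq0 (A X : C) : Cmod A < 1 -> Cmod X <= 1 -> (1 - Cconj A * X)%C <> 0%C.
Proof. intros HA HX; apply one_sub_neq0, Cmod_mult_lt_1; [rewrite Cmod_conj|]; assumption. Qed.

Lemma gdir_disk_aut (a : C) (th : R) (A X : C) :
  Cmod a < 1 -> Cmod A < 1 -> Cmod X <= 1 ->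
  gdir (disk_aut a th A) (disk_aut a th X)
  = (cis th * (1 + a * Cconj A) / (1 + Cconj a * A) * gdir A X)%C.
Proof.
  intros Ha HA HX.
  assert (Haa : Cmod (Cconj a) < 1) by (rewrite Cmod_conj; exact Ha).
  assert (HAA : Cmod (Cconj A) < 1) by (rewrite Cmod_conj; exact HA).
  assert (n1 : (1 + Cconj a * A)%C <> 0%C) by (apply one_add_neq0, Cmod_mult_lt_1; lra).
  assert (n2 : (1 + Cconj a * X)%C <> 0%C) by (apply one_add_neq0, Cmod_mult_lt_1; lra).
  assert (n3 : (1 + a * Cconj A)%C <> 0%C) by (apply one_add_neq0, Cmod_mult_lt_1; lra).
  assert (n4 : (1 - a * Cconj a)%C <> 0%C) by (apply one_sub_neq0, Cmod_mult_lt_1; lra).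
  assert (n5 := gdir_den_neq0 A X HA HX).
  assert (Hu : (Cconj (cis th) * cis th)%C = 1%C) by (apply Cconj_mult_unit, Cmod_cis).
  assert (nu : cis th <> 0%C) by (intros E; rewrite E, Cmult_0_r in Hu; apply C1_nz; auto).
  assert (Hu' : Cconj (cis th) = (/ cis th)%C)
    by (field_simplify_eq; auto; rewrite Cmult_comm; exact Hu).
  assert (n6 :
    ((1 + a * Cconj A) * (1 + Cconj a * X) - (Cconj A + Cconj a) * (X + a))%C <> 0%C).
  { replace ((1 + a * Cconj A) * (1 + Cconj a * X) - (Cconj A + Cconj a) * (X + a))%C
      with ((1 - a * Cconj a) * (1 - Cconj A * X))%C by ring.
    apply Cmult_neq_0; assumption. }
  unfold gdir, disk_aut, Cdiv.
  rewrite !Cmult_conj, Cconj_inv, !Cplus_conj, Cmult_conj, Cconj_conj, (Cconj_RtoC 1), Hu'.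
  field; repeat split; assumption.
Qed.

Lemma geod_beyond_disk_aut (a : C) (th : R) (B A X : C) :
  Cmod a < 1 -> Cmod A < 1 -> Cmod B <= 1 -> Cmod X <= 1 ->
  geod_beyond B A X -> geod_beyond (disk_aut a th B) (disk_aut a th A) (disk_aut a th X).
Proof.
  intros Ha HA HB HX (l & Hl & E); exists l; split; [exact Hl|].
  rewrite !gdir_disk_aut, E by assumption; ring.
Qed.

Lemma gdir_RtoC (s w : R) :
  s * w <> 1 -> gdir (RtoC s) (RtoC w) = RtoC ((w - s) / (1 - s * w)).
Proof.
  intros Hsw; unfold gdir; rewrite Cconj_RtoC, RtoC_div, RtoC_minus, RtoC_minus, RtoC_mult.
  - reflexivity.
  - lra.
Qed.

Lemma Rmult_lt_1 (s v : R) : -1 < s < 1 -> -1 <= v <= 1 -> s * v < 1.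
Proof. intros; destruct (Rle_or_lt 0 v); nra. Qed.

Lemma geod_beyond_real (v s w : R) :
  -1 <= v <= 1 -> -1 < s < 1 -> -1 <= w <= 1 -> (w - s) * (v - s) < 0 ->
  geod_beyond (RtoC v) (RtoC s) (RtoC w).
Proof.
  intros Hv Hs Hw Hsign.
  assert (Hsv := Rmult_lt_1 s v Hs Hv).
  assert (Hsw := Rmult_lt_1 s w Hs Hw).
  assert (Hvs : v - s <> 0) by (intros E; rewrite E in Hsign; lra).
  exists ((w - s) * (s - v) * (1 - s * v) / ((s - v) ^ 2 * (1 - s * w))); split.
  - apply Rdiv_lt_0_compat; [|apply Rmult_lt_0_compat]; nra.
  - rewrite !gdir_RtoC by lra; rewrite <- RtoC_opp, <- RtoC_mult; f_equal.
    field; repeat split; lra.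
Qed.

Lemma Cmod_disk_aut_unit (a : C) (th : R) (z : C) :
  Cmod a < 1 -> Cmod z = 1 -> Cmod (disk_aut a th z) = 1.
Proof.
  intros Ha Hz.
  assert (Hden : (1 + Cconj a * z)%C = (1 - Cconj (- a) * z)%C)
    by (rewrite Copp_conj; ring).
  assert (Hn : (1 + Cconj a * z)%C <> 0%C)
    by (apply one_add_neq0, Cmod_mult_lt_1; [rewrite Cmod_conj|]; lra).
  assert (Hmod : Cmod (1 + Cconj a * z) = Cmod (z + a)).
  { rewrite Hden, Cmod_one_sub_conj_mult by exact Hz; f_equal; ring. }
  assert (Hpos : 0 < Cmod (z + a)) by (rewrite <- Hmod; apply Cmod_gt_0, Hn).
  unfold disk_aut; rewrite Cmod_mult, Cmod_cis, Cmod_div, Hmod by exact Hn.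
  field; lra.
Qed.

Lemma Cmod_RtoC_le_1 (s : R) : -1 <= s <= 1 -> Cmod (RtoC s) <= 1.
Proof. intros Hs; rewrite Cmod_R; apply Rabs_le; exact Hs. Qed.

Lemma Cmod_RtoC_lt_1 (s : R) : -1 < s < 1 -> Cmod (RtoC s) < 1.
Proof. intros Hs; rewrite Cmod_R; apply Rabs_def1; apply Hs. Qed.

Lemma geod_through_ideal (P Q A B : C) : geod_through P Q A B -> Cmod P = 1 /\ Cmod Q = 1.
Proof.
  intros (a & th & s & t & Ha & <- & <- & _).
  split; apply Cmod_disk_aut_unit; try exact Ha;
    rewrite Cmod_R; unfold Rabs; destruct Rcase_abs; lra.
Qed.

Lemma geod_through_beyond (P Q A B : C) :
  geod_through P Q A B -> geod_beyond B A P /\ geod_beyond A B Q.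
Proof.
  intros (a & th & s & t & Ha & <- & <- & Hs & Hst & Ht & <- & <-).
  split; apply geod_beyond_disk_aut;
    first [assumption | apply Cmod_RtoC_lt_1 | apply Cmod_RtoC_le_1 | apply geod_beyond_real];
    nra.
Qed.

Lemma gdir_mul_den (A X : C) :
  (1 - Cconj A * X)%C <> 0%C -> (gdir A X * (1 - Cconj A * X))%C = (X - A)%C.
Proof. intros Hn; unfold gdir; field; exact Hn. Qed.

Lemma gdir_eq (A X w : C) :
  (1 - Cconj A * X)%C <> 0%C -> (X - A)%C = (w * (1 - Cconj A * X))%C -> gdir A X = w.
Proof. intros Hn E; unfold gdir; rewrite E; field; exact Hn. Qed.

(* Inverts [X |-> gdir A X]. *)
Lemma gdir_endpoint (A X : C) :
  (1 - Cconj A * X)%C <> 0%C -> (X * (1 + Cconj A * gdir A X))%C = (gdir A X + A)%C.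
Proof. intros Hn; unfold gdir; field; exact Hn. Qed.

Lemma Cmod_gdir_ideal (A X : C) : Cmod A < 1 -> Cmod X = 1 -> Cmod (gdir A X) = 1.
Proof.
  intros HA HX.
  assert (Hn : (1 - Cconj A * X)%C <> 0%C) by (apply gdir_den_neq0; lra).
  assert (Hmod := Cmod_one_sub_conj_mult A X HX).
  assert (Hpos : 0 < Cmod (X - A)) by (rewrite <- Hmod; apply Cmod_gt_0, Hn).
  unfold gdir; rewrite Cmod_div, Hmod by exact Hn; field; lra.
Qed.

(* The geodesic through [r] orthogonal to the real axis meets the unit circle where
   [Re = 2 r / (1 + r^2)]; ideal points on the side of [0] are seen from [r] in directions
   of negative real part. *)
Lemma Re_gdir_RtoC_neg (r : R) (X : C) :
  0 <= r < 1 -> Cmod X = 1 -> (1 + r ^ 2) * Re X < 2 * r -> Re (gdir (RtoC r) X) < 0.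
Proof.
  intros Hr HX Hre.
  assert (Hn : (1 - Cconj (RtoC r) * X)%C <> 0%C)
    by (apply gdir_den_neq0; [apply Cmod_RtoC_lt_1|]; lra).
  assert (M := gdir_mul_den _ _ Hn); rewrite Cconj_RtoC in M.
  apply Cmod_eq_1 in HX.
  destruct (gdir (RtoC r) X) as [u1 u2], X as [p1 p2]; simpl in *.
  assert (M1 := f_equal fst M); assert (M2 := f_equal snd M); simpl in M1, M2.
  assert (Hp1 : r * p1 < 1) by (apply Rmult_lt_1; nra).
  assert (Hu1 : u1 * ((1 - r * p1) * (1 - r * p1) + (r * p2) * (r * p2))
                = (1 + r * r) * p1 - 2 * r) by (clear - M1 M2 HX; nsatz).
  assert (0 < (1 - r * p1) * (1 - r * p1) + (r * p2) * (r * p2)) by nra.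
  nra.
Qed.

Lemma acos_eq_PI2 (t : R) : acos t = PI / 2 -> t = 0.
Proof.
  intros H; pose proof PI_RGT_0.
  assert (Ht : -1 < t < 1) by (revert H; unfold acos; repeat case Rle_dec; intros; lra).
  rewrite <- (cos_acos t), H by lra; apply cos_PI2.
Qed.

Lemma acos_gt_PI4 (t : R) : t < / sqrt 2 -> acos t > PI / 4.
Proof.
  intros Ht; pose proof PI_RGT_0.
  assert (Hs : / sqrt 2 < 1).
  { rewrite <- Rinv_1; apply Rinv_lt_contravar; rewrite ?Rmult_1_l.
    - apply sqrt_lt_R0; lra.
    - rewrite <- sqrt_1; apply sqrt_lt_1; lra. }
  destruct (Rle_lt_dec t (-1)) as [Hm | Hm].
  { unfold acos; destruct (Rle_dec t (-1)); lra. }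
  pose proof (acos_bound t).
  destruct (Rle_lt_dec (acos t) (PI / 4)) as [Hle | Hgt]; [exfalso | exact Hgt].
  assert (Hcos : cos (PI / 4) <= cos (acos t)).
  { destruct (Req_dec (acos t) (PI / 4)) as [E | Hne]; [rewrite E; lra|].
    apply Rlt_le, cos_decreasing_1; lra. }
  rewrite cos_acos, cos_PI4 in Hcos by lra; unfold Rdiv in Hcos; lra.
Qed.

Lemma vangle_eq_PI2 (u v : C) :
  u <> 0%C -> v <> 0%C -> vangle u v = PI / 2 -> Re (u * Cconj v) = 0.
Proof.
  intros Hu Hv H; apply acos_eq_PI2 in H.
  apply Cmod_gt_0 in Hu; apply Cmod_gt_0 in Hv.
  unfold Rdiv in H; apply Rmult_integral in H; destruct H as [H | H]; [exact H|].
  exfalso; revert H; apply Rinv_neq_0_compat; nra.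
Qed.

Lemma vangle_scale_r (l : R) (u v : C) : 0 < l -> vangle u (RtoC l * v) = vangle u v.
Proof.
  intros Hl; unfold vangle.
  rewrite Cmult_conj, Cconj_RtoC, Cmod_mult, Cmod_R, Rabs_pos_eq by lra.
  replace (u * (RtoC l * Cconj v))%C with (RtoC l * (u * Cconj v))%C by ring.
  rewrite re_scal_l; f_equal.
  destruct (Req_dec (Cmod u * Cmod v) 0) as [E | E].
  - replace (Cmod u * (l * Cmod v)) with (l * (Cmod u * Cmod v)) by ring.
    rewrite E, Rmult_0_r; unfold Rdiv; rewrite Rinv_0; ring.
  - field; repeat split; try lra; intros Z; apply E; rewrite Z; ring.
Qed.

Lemma vangle_diag_gt_PI4 (z : C) : Re z < 0 -> vangle z (1, 1) > PI / 4.
Proof.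
  destruct z as [z1 z2]; simpl; intros Hz.
  unfold vangle; apply acos_gt_PI4.
  assert (Hs : 0 < sqrt 2) by (apply sqrt_lt_R0; lra).
  assert (E2 : Cmod (1, 1) = sqrt 2) by (unfold Cmod; simpl; f_equal; ring).
  assert (Hm : 0 < Cmod (z1, z2)) by (unfold Cmod; simpl; apply sqrt_lt_R0; nra).
  assert (Hz2 : z2 <= Cmod (z1, z2)).
  { apply (Rle_trans _ (Rabs z2)); [apply Rle_abs|].
    apply (Rle_trans _ _ _ (Rmax_r _ _) (Rmax_Cmod (z1, z2))). }
  rewrite E2; unfold Re, Cmult, Cconj; simpl.
  apply (Rmult_lt_reg_r (Cmod (z1, z2) * sqrt 2)); [nra|].
  field_simplify; [|lra..].
  lra.
Qed.

(** * A right-angled vertex of a regular polygon *)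

Section RightAngledVertex.

Variables r x y : R.
Hypotheses (Hr : 0 < r < 1) (Hxy : x ^ 2 + y ^ 2 = 1) (Hy : 0 < y).

Let c : C := (x, y).

Lemma Cmod_vertex_dir : Cmod c = 1.
Proof. apply Cmod_eq_1; exact Hxy. Qed.

Lemma vertex_dir_re_lt_1 : x < 1.
Proof. nra. Qed.

Lemma gdir_first_side :
  exists s : R, 0 < s /\
    gdir (RtoC r) (RtoC r * c) = Cmult (RtoC s) (- ((1 - x) * (1 + r ^ 2)), y * (1 - r ^ 2)).
Proof.
  set (d := (1 - r ^ 2 * x) ^ 2 + (r ^ 2 * y) ^ 2).
  assert (Hd : 0 < d).
  { assert (0 < r ^ 2 * y) by (apply Rmult_lt_0_compat; nra).
    apply Rplus_le_lt_0_compat; [apply pow2_ge_0 | apply pow_lt; assumption]. }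
  exists (r / d); split; [apply Rdiv_lt_0_compat; lra|].
  apply gdir_eq.
  - apply gdir_den_neq0; [apply Cmod_RtoC_lt_1; lra|].
    rewrite Cmod_mult, Cmod_vertex_dir, Cmod_R, Rabs_pos_eq; lra.
  - unfold Rdiv; set (e := / d); assert (He : e * d = 1) by (unfold e; field; lra).
    unfold d in He; clearbody e.
    apply injective_projections; simpl; simpl in He, Hxy; clear - He Hxy; nsatz.
Qed.

Lemma gdir_prev_side : gdir (RtoC r) (RtoC r * Cconj c) = Cconj (gdir (RtoC r) (RtoC r * c)).
Proof. rewrite <- gdir_conj, Cmult_conj, Cconj_RtoC; reflexivity. Qed.

Lemma right_angle_relation :
  hangle (RtoC r) (RtoC r * Cconj c) (RtoC r * c) = PI / 2 ->
  (1 - x) * (1 + r ^ 2) = y * (1 - r ^ 2).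
Proof.
  intros H; destruct gdir_first_side as (s & Hs & E).
  unfold hangle in H.
  rewrite gdir_prev_side, E in H.
  assert (Hnz : Cmult (RtoC s) (- ((1 - x) * (1 + r ^ 2)), y * (1 - r ^ 2)) <> 0%C).
  { assert (0 < s * (y * (1 - r ^ 2)))
      by (apply Rmult_lt_0_compat; [|apply Rmult_lt_0_compat]; nra).
    intros Z; apply (f_equal snd) in Z; simpl in Z; nra. }
  apply vangle_eq_PI2 in H; [| intros Z; apply Hnz; rewrite <- (Cconj_conj (_ * _)), Z;
                              apply injective_projections; simpl; ring | exact Hnz].
  assert (Hx1 := vertex_dir_re_lt_1).
  assert (HA : 0 < (1 - x) * (1 + r ^ 2)) by (apply Rmult_lt_0_compat; nra).
  assert (HB : 0 < y * (1 - r ^ 2)) by (apply Rmult_lt_0_compat; nra).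
  set (A := (1 - x) * (1 + r ^ 2)) in *; set (B := y * (1 - r ^ 2)) in *.
  assert (Hfac : (s * A - s * B) * (s * A + s * B) = 0) by (rewrite <- H; simpl; ring).
  apply Rmult_integral in Hfac; destruct Hfac as [Hfac | Hfac]; [|nra].
  apply (Rmult_eq_reg_l s); lra.
Qed.

Hypothesis Hrel : (1 - x) * (1 + r ^ 2) = y * (1 - r ^ 2).

Lemma gdir_first_side_diag :
  exists m : R, 0 < m /\ gdir (RtoC r) (RtoC r * c) = Cmult (RtoC m) (-1, 1).
Proof.
  destruct gdir_first_side as (s & Hs & E).
  exists (s * (y * (1 - r ^ 2))); split.
  - apply Rmult_lt_0_compat; [|apply Rmult_lt_0_compat]; nra.
  - rewrite E; apply injective_projections; simpl; clear - Hrel; simpl in *; nsatz.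
Qed.

Lemma right_angle_relation_sqr : (1 + r ^ 2) ^ 2 * (1 - x) = (1 - r ^ 2) ^ 2 * (1 + x).
Proof.
  assert (Hx1 := vertex_dir_re_lt_1).
  assert (E : (1 - x) * ((1 + r ^ 2) ^ 2 * (1 - x) - (1 - r ^ 2) ^ 2 * (1 + x)) = 0)
    by (clear - Hrel Hxy; simpl in *; nsatz).
  apply Rmult_integral in E; destruct E; lra.
Qed.

Lemma right_angle_radius : 4 * r ^ 2 * (1 + x) = 2 * x * (1 + r ^ 2) ^ 2.
Proof. assert (E := right_angle_relation_sqr); clear - E; simpl in *; nsatz. Qed.

Hypothesis Hx : 1 / 2 <= x.

(* Here [k = 1/sqrt 2]. The bound reduces to [k (1 + r^2) < 2 r (1 + x)], that is
   [x (1 + x) > 1/4]: this is where [x >= 1/2] is used. *)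
Lemma re_endpoint_bound (k p1 : R) :
  0 < k -> 2 * k ^ 2 = 1 ->
  p1 * (1 + r ^ 2 + 2 * r * k) = x * (2 * r + k * (1 + r ^ 2)) + y * k * (1 - r ^ 2) ->
  (1 + r ^ 2) * p1 < 2 * r.
Proof.
  intros Hk Hk2 Hp1.
  assert (Hx1 := vertex_dir_re_lt_1).
  assert (Hqp := right_angle_relation_sqr); assert (Hrq := right_angle_radius).
  assert (Hpq : (1 + r ^ 2) ^ 2 - 4 * r ^ 2 = (1 - r ^ 2) ^ 2) by ring.
  assert (Hq : 1 < 1 + r ^ 2) by nra; assert (Hp : 0 < 1 - r ^ 2) by nra.
  set (q := 1 + r ^ 2) in *; set (p := 1 - r ^ 2) in *; clearbody q p.
  assert (Hkq : k * q < 2 * r * (1 + x)).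
  { assert (Hsq : (k * q) ^ 2 < (2 * r * (1 + x)) ^ 2).
    { assert (E1 : (k * q) ^ 2 * 2 = q ^ 2)
        by (transitivity (2 * k ^ 2 * q ^ 2); [ring | rewrite Hk2; ring]).
      assert (E2 : (2 * r * (1 + x)) ^ 2 = 2 * x * (1 + x) * q ^ 2)
        by (transitivity (4 * r ^ 2 * (1 + x) * (1 + x)); [ring | rewrite Hrq; ring]).
      assert (0 < q ^ 2) by nra.
      nra. }
    apply Rsqr_incrst_0; rewrite ?Rsqr_pow2; nra. }
  assert (Hkp : k * p ^ 2 < 2 * r * q * (1 - x)).
  { apply (Rmult_lt_reg_r (1 + x)); [lra|].
    replace (k * p ^ 2 * (1 + x)) with ((k * q) * (q * (1 - x)))
      by (transitivity (k * (q ^ 2 * (1 - x))); [ring | rewrite Hqp; ring]).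
    replace (2 * r * q * (1 - x) * (1 + x)) with (2 * r * (1 + x) * (q * (1 - x))) by ring.
    apply Rmult_lt_compat_r; [nra | exact Hkq]. }
  assert (Hmain : q * p1 * (q + 2 * r * k) = 2 * r * q * x + k * q ^ 2)
    by (clear - Hp1 Hrel; simpl in *; nsatz).
  apply (Rmult_lt_reg_r (q + 2 * r * k)); [nra|].
  rewrite Hmain; nra.
Qed.

Lemma ideal_endpoint_re_lt (X : C) :
  Cmod X = 1 -> geod_beyond (RtoC r * (c * c)) (RtoC r * c) X -> (1 + r ^ 2) * Re X < 2 * r.
Proof.
  intros HX (l & Hl & El).
  destruct gdir_first_side_diag as (m & Hm & Em).
  assert (Hc := Cmod_vertex_dir).
  assert (Hrc : Cmod (RtoC r * c) < 1)
    by (rewrite Cmod_mult, Hc, Cmod_R, Rabs_pos_eq; lra).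
  assert (Eside : gdir (RtoC r * c) (RtoC r * (c * c)) = (c * gdir (RtoC r) (RtoC r * c))%C).
  { replace (RtoC r * c)%C with (c * RtoC r)%C at 1 by ring.
    replace (RtoC r * (c * c))%C with (c * (RtoC r * c))%C by ring.
    exact (gdir_ortho_map (fun z => (c * z)%C) _ _ (ortho_map_rot c Hc)). }
  assert (Eu : gdir (RtoC r * c) X = Cmult (RtoC (l * m)) (x + y, y - x))
    by (rewrite El, Eside, Em; apply injective_projections; simpl; ring).
  assert (Hu := Cmod_gdir_ideal _ _ Hrc HX).
  assert (Hend := gdir_endpoint _ _ (gdir_den_neq0 _ _ Hrc (Req_le _ _ HX))).
  rewrite Eu in Hu, Hend; apply Cmod_eq_1 in Hu.
  destruct X as [p1 p2]; simpl.
  assert (H1 := f_equal fst Hend); assert (H2 := f_equal snd Hend); simpl in Hu, H1, H2.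
  apply (re_endpoint_bound (l * m) p1); [nra | clear - Hu Hxy; simpl in *; nsatz |].
  clear - H1 H2 Hu Hxy; simpl in *; nsatz.
Qed.

Lemma hangle_gt_PI4_normalized (X Y : C) :
  Cmod X = 1 -> geod_beyond (RtoC r * (c * c)) (RtoC r * c) X ->
  geod_beyond (RtoC r * Cconj c) (RtoC r) Y -> hangle (RtoC r) X Y > PI / 4.
Proof.
  intros HX HXb (l & Hl & El).
  destruct gdir_first_side_diag as (m & Hm & Em).
  assert (EY : gdir (RtoC r) Y = Cmult (RtoC (l * m)) (1, 1))
    by (rewrite El, gdir_prev_side, Em; apply injective_projections; simpl; ring).
  unfold hangle; rewrite EY, vangle_scale_r by nra.
  apply vangle_diag_gt_PI4, Re_gdir_RtoC_neg; [lra | exact HX |].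
  apply ideal_endpoint_re_lt; assumption.
Qed.

End RightAngledVertex.

Lemma vert_rotate (g : nat) (r th0 : R) (m k : Z) :
  (Cconj (cis (th0 + 2 * PI * IZR m / nsides g)) * vert g r th0 k)%C = vert g r 0 (k - m).
Proof.
  unfold vert; rewrite <- cis_opp.
  replace (0 + 2 * PI * IZR (k - m) / nsides g)
    with (th0 + 2 * PI * IZR k / nsides g + - (th0 + 2 * PI * IZR m / nsides g))
    by (rewrite minus_IZR; unfold Rdiv; ring).
  rewrite (cis_add (th0 + 2 * PI * IZR k / nsides g)); ring.
Qed.

Lemma vert_conj (g : nat) (r : R) (j : Z) : Cconj (vert g r 0 j) = vert g r 0 (- j).
Proof.
  unfold vert; rewrite Cmult_conj, Cconj_RtoC, <- cis_opp, opp_IZR.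
  do 2 f_equal; unfold Rdiv; ring.
Qed.

Section OriginVertices.

Variables (g : nat) (r : R).

Let c : C := cis (2 * PI / nsides g).

Lemma vert_origin_0 : vert g r 0 0 = RtoC r.
Proof.
  unfold vert; replace (0 + 2 * PI * IZR 0 / nsides g) with 0 by (unfold Rdiv; ring).
  rewrite cis_0; ring.
Qed.

Lemma vert_origin_1 : vert g r 0 1 = (RtoC r * c)%C.
Proof. unfold vert, c; do 2 f_equal; unfold Rdiv; ring. Qed.

Lemma vert_origin_2 : vert g r 0 2 = (RtoC r * (c * c))%C.
Proof.
  unfold vert, c; rewrite <- cis_add; do 2 f_equal; unfold Rdiv; ring.
Qed.

Lemma vert_origin_m1 : vert g r 0 (-1) = (RtoC r * Cconj c)%C.
Proof. unfold vert, c; rewrite <- cis_opp; do 2 f_equal; unfold Rdiv; ring. Qed.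

End OriginVertices.

Lemma nsides_dir_bounds (g : nat) :
  (2 <= g)%nat -> 1 / 2 <= cos (2 * PI / nsides g) /\ 0 < sin (2 * PI / nsides g).
Proof.
  intros Hg.
  assert (HN : 12 <= nsides g) by (unfold nsides; apply le_INR in Hg; simpl in Hg; lra).
  pose proof PI_RGT_0.
  assert (Ha : 0 < 2 * PI / nsides g <= PI / 6).
  { split; [apply Rdiv_lt_0_compat; lra|].
    apply (Rmult_le_reg_r (nsides g)); [lra|].
    unfold Rdiv; rewrite Rmult_assoc, Rinv_l by lra; nra. }
  split.
  - rewrite <- cos_PI3; apply Rlt_le, cos_decreasing_1; lra.
  - apply sin_gt_0; lra.
Qed.

Section RegularPolygon.

Variables (g : nat) (r : R).
Hypotheses (Hg : (2 <= g)%nat) (Hr : 0 < r < 1)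
  (Hright_origin : hangle (vert g r 0 0) (vert g r 0 (-1)) (vert g r 0 1) = PI / 2).

Lemma hangle_gt_PI4_ortho_map (f : C -> C) (V0 V1 V2 Vm X Y : C) :
  ortho_map f ->
  f V0 = vert g r 0 0 -> f V1 = vert g r 0 1 -> f V2 = vert g r 0 2 ->
  f Vm = vert g r 0 (-1) ->
  Cmod X = 1 -> geod_beyond V2 V1 X -> geod_beyond Vm V0 Y -> hangle V0 X Y > PI / 4.
Proof.
  intros Hf E0 E1 E2 Em HX HXb HYb.
  destruct (nsides_dir_bounds g Hg) as [Hx Hy].
  assert (Hxy := sin2_cos2 (2 * PI / nsides g)); unfold Rsqr in Hxy.
  apply (geod_beyond_ortho_map f) in HXb, HYb; try exact Hf.
  rewrite <- (Cmod_ortho_map f X) in HX by exact Hf.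
  rewrite <- (hangle_ortho_map f) by exact Hf.
  rewrite E0, E1, E2, Em in *.
  rewrite vert_origin_0, vert_origin_1, vert_origin_2, vert_origin_m1 in *.
  assert (Hxy2 : cos (2 * PI / nsides g) ^ 2 + sin (2 * PI / nsides g) ^ 2 = 1)
    by (rewrite <- Hxy; ring).
  apply (hangle_gt_PI4_normalized r (cos (2 * PI / nsides g)) (sin (2 * PI / nsides g)));
    try assumption.
  apply right_angle_relation; assumption.
Qed.

End RegularPolygon.

Section PolygonAngles.

Variables (g : nat) (r th0 : R) (P Q : Z -> C).
Hypotheses (Hg : (2 <= g)%nat) (Hr : 0 < r < 1)
  (Hright : forall k : Z,
     hangle (vert g r th0 k) (vert g r th0 (k - 1)) (vert g r th0 (k + 1)) = PI / 2)
  (Hsides : forall k : Z,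
     geod_through (P k) (Q (k + 1)%Z) (vert g r th0 k) (vert g r th0 (k + 1))).

Let rot (m : Z) (z : C) : C := (Cconj (cis (th0 + 2 * PI * IZR m / nsides g)) * z)%C.

Lemma ortho_map_rot_vert (m : Z) : ortho_map (rot m).
Proof. apply ortho_map_rot; rewrite Cmod_conj; apply Cmod_cis. Qed.

Lemma right_angle_at_origin : hangle (vert g r 0 0) (vert g r 0 (-1)) (vert g r 0 1) = PI / 2.
Proof.
  rewrite <- (Hright 0), <- (hangle_ortho_map (rot 0) (vert g r th0 0))
    by apply ortho_map_rot_vert.
  unfold rot; rewrite !vert_rotate; reflexivity.
Qed.

Lemma angle_at_next_vertex (i : Z) :
  hangle (vert g r th0 (i + 1)) (P (i + 2)%Z) (Q (i + 1)%Z) > PI / 4.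
Proof.
  destruct (geod_through_ideal _ _ _ _ (Hsides (i + 2))) as [HP _].
  destruct (geod_through_beyond _ _ _ _ (Hsides (i + 2))) as [HPb _].
  destruct (geod_through_beyond _ _ _ _ (Hsides i)) as [_ HQb].
  apply (hangle_gt_PI4_ortho_map g r Hg Hr right_angle_at_origin (rot (i + 1))
           _ (vert g r th0 (i + 2)) (vert g r th0 (i + 2 + 1)) (vert g r th0 i));
    try apply ortho_map_rot_vert; try assumption;
    unfold rot; rewrite vert_rotate; f_equal; ring.
Qed.

Lemma angle_at_prev_vertex (i : Z) :
  hangle (vert g r th0 i) (Q (i - 1)%Z) (P i) > PI / 4.
Proof.
  destruct (geod_through_ideal _ _ _ _ (Hsides (i - 2))) as [_ HQ].
  destruct (geod_through_beyond _ _ _ _ (Hsides (i - 2))) as [_ HQb].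
  destruct (geod_through_beyond _ _ _ _ (Hsides i)) as [HPb _].
  replace (i - 2 + 1)%Z with (i - 1)%Z in HQ, HQb by ring.
  (* The reflection sends [V_(i - j)] to the vertex [j] of the normalized polygon. *)
  apply (hangle_gt_PI4_ortho_map g r Hg Hr right_angle_at_origin (fun z => Cconj (rot i z))
           _ (vert g r th0 (i - 1)) (vert g r th0 (i - 2)) (vert g r th0 (i + 1)));
    try (apply ortho_map_rot_conj; rewrite Cmod_conj; apply Cmod_cis); try assumption;
    unfold rot; rewrite vert_rotate, vert_conj; f_equal; ring.
Qed.

End PolygonAngles.

Theorem lemma8p1 :
  forall (g : nat) (r th0 : R) (P Q : Z -> C),
    (2 <= g)%nat ->
    0 < r < 1 ->
    (* all interior angles of the regular polygon equal pi/2 *)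
    (forall k : Z,
        hangle (vert g r th0 k) (vert g r th0 (k - 1)%Z) (vert g r th0 (k + 1)%Z)
        = PI / 2) ->
    (* the geodesic containing side k (from V_k to V_{k+1}) has endpoints
       P_k beyond V_k and Q_{k+1} beyond V_{k+1} *)
    (forall k : Z,
        geod_through (P k) (Q (k + 1)%Z) (vert g r th0 k) (vert g r th0 (k + 1)%Z)) ->
    forall i : Z,
      hangle (vert g r th0 (i + 1)%Z) (P (i + 2)%Z) (Q (i + 1)%Z) > PI / 4 /\
      hangle (vert g r th0 i) (Q (i - 1)%Z) (P i) > PI / 4.
Proof.
  intros g r th0 P Q Hg Hr Hright Hsides i.
  split; [apply angle_at_next_vertex | apply angle_at_prev_vertex]; assumption.
Qed.
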